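(* Let $q$ be an even integer with $q\geq4$. Then $\sqrt{(q-1)(17q-1)}$ is an integer if and only if \[ q\in\left\{\frac1{34}\left(\operatorname{tr}\!\left((2177+528\sqrt{17})^{m}(433+105\sqrt{17})\right)+18\right)\;\middle|\;m\in\mathbb{Z}\right\}. \]
   Context: $\operatorname{tr}$ denotes the trace from $\mathbb{Q}(\sqrt{17})$ to $\mathbb{Q}$, i.e. $\operatorname{tr}(a+b\sqrt{17})=2a$ for $a,b\in\mathbb{Q}$. *)

(* The quadratic field Q(sqrt 17) is modelled concretely as
   pairs (a, b) of rationals standing for a + b*sqrt 17. *)
From mathcomp Require Import all_boot all_order all_algebra.
Set Implicit Arguments. Unset Strict Implicit. Unset Printing Implicit Defensive.
Import Order.TTheory GRing.Theory Num.Theory.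
Local Open Scope ring_scope.

Record qs17 := QS { qre : rat; qir : rat }.

Definition qs17_mul (x y : qs17) : qs17 :=
  QS (qre x * qre y + 17%:R * qir x * qir y) (qre x * qir y + qir x * qre y).

Definition qs17_one : qs17 := QS 1 0.

Definition qs17_norm (x : qs17) : rat := qre x ^+ 2 - 17%:R * qir x ^+ 2.

Definition qs17_inv (x : qs17) : qs17 :=
  QS (qre x / qs17_norm x) (- qir x / qs17_norm x).

Fixpoint qs17_expn (x : qs17) (n : nat) : qs17 :=
  match n with 0%N => qs17_one | n.+1 => qs17_mul x (qs17_expn x n) end.

Definition qs17_expz (x : qs17) (m : int) : qs17 :=
  match m with
  | Posz n => qs17_expn x n
  | Negz n => qs17_expn (qs17_inv x) n.+1
  end.

Definition qs17_tr (x : qs17) : rat := 2%:R * qre x.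

(** The substitution x = 17q - 9 turns (q - 1)(17q - 1) = k^2 into the Pell-type
    equation x^2 - 17k^2 = 64, and q even into x = 25 (mod 34); the right-hand
    side says that x is the rational part of eps^m alpha, where
    eps = 2177 + 528 sqrt 17 has norm 1 and alpha = 433 + 105 sqrt 17 has norm 64.
    So every such q gives a solution by multiplicativity of the norm.  Conversely,
    multiplication by eps^-1 preserves the equation and the congruence, and when
    y > 64 it keeps x positive and strictly decreases |y|.  Descent therefore
    reaches a solution with |y| <= 64, and a finite search shows that the only one
    is 161 + 39 sqrt 17, the conjugate of eps^-1 alpha. *)

From mathcomp Require Import all_boot all_order all_algebra.
From mathcomp Require Import ring lra zify.
Import Order.TTheory GRing.Theory Num.Theory.
Local Open Scope ring_scope.

Section QuadraticIntegers.

Variable d : int.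

(* [(a, b)] stands for [a + b sqrt d]. *)
Definition zq_mul (u v : int * int) : int * int :=
  (u.1 * v.1 + d * u.2 * v.2, u.1 * v.2 + u.2 * v.1).

Definition zq_conj (u : int * int) : int * int := (u.1, - u.2).

Definition zq_norm (u : int * int) : int := u.1 ^+ 2 - d * u.2 ^+ 2.

Fixpoint zq_expn (u : int * int) (n : nat) : int * int :=
  if n is n'.+1 then zq_mul u (zq_expn u n') else (1, 0).

Definition zq_expz (u : int * int) (m : int) : int * int :=
  match m with
  | Posz n => zq_expn u n
  | Negz n => zq_expn (zq_conj u) n.+1
  end.

Lemma zq_mulA : associative zq_mul.
Proof. by case=> [a1 a2] [b1 b2] [c1 c2]; rewrite /zq_mul /=; apply: (f_equal2 pair); ring. Qed.

Lemma zq_conjK : involutive zq_conj.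
Proof. by case=> a1 a2; rewrite /zq_conj /= opprK. Qed.

Lemma zq_mul1 : left_id (1, 0) zq_mul.
Proof. by case=> [a1 a2]; rewrite /zq_mul /=; apply: (f_equal2 pair); ring. Qed.

Lemma zq_mul_conj u : zq_mul u (zq_conj u) = (zq_norm u, 0).
Proof. by case: u => [a1 a2]; rewrite /zq_mul /zq_norm /=; apply: (f_equal2 pair); ring. Qed.

Lemma zq_mul_conjl u : zq_mul (zq_conj u) u = (zq_norm u, 0).
Proof. by case: u => [a1 a2]; rewrite /zq_mul /zq_norm /=; apply: (f_equal2 pair); ring. Qed.

Lemma zq_conjM u v : zq_conj (zq_mul u v) = zq_mul (zq_conj u) (zq_conj v).
Proof. by case: u v => [a1 a2] [b1 b2]; rewrite /zq_mul /zq_conj /=; apply: (f_equal2 pair); ring. Qed.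

Lemma zq_normM u v : zq_norm (zq_mul u v) = zq_norm u * zq_norm v.
Proof. by case: u v => [a1 a2] [b1 b2]; rewrite /zq_norm /=; ring. Qed.

Lemma zq_norm_conj u : zq_norm (zq_conj u) = zq_norm u.
Proof. by rewrite /zq_norm sqrrN. Qed.

Lemma zq_norm_expn u n : zq_norm u = 1 -> zq_norm (zq_expn u n) = 1.
Proof.
move=> u1; elim: n => [|n IH] /=; last by rewrite zq_normM u1 IH mul1r.
by rewrite /zq_norm /=; ring.
Qed.

Section Unit.

Variable u : int * int.
Hypothesis u_unit : zq_norm u = 1.

Lemma zq_norm_expz m : zq_norm (zq_expz u m) = 1.
Proof. by case: m => n; apply: zq_norm_expn; rewrite ?zq_norm_conj. Qed.

Lemma zq_expzS m : zq_expz u (m + 1) = zq_mul u (zq_expz u m).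
Proof.
case: m => [n|[|n]]; first by have -> : Posz n + 1 = n.+1 by lia.
  have -> : Negz 0 + 1 = 0 by lia.
  by rewrite /= zq_mulA zq_mul_conj u_unit zq_mul1.
have -> : Negz n.+1 + 1 = Negz n by lia.
by rewrite [in RHS]/= !zq_mulA zq_mul_conj u_unit zq_mul1.
Qed.

Lemma zq_expzB1 m : zq_expz u (m - 1) = zq_mul (zq_conj u) (zq_expz u m).
Proof. by rewrite -[in RHS](subrK 1 m) zq_expzS zq_mulA zq_mul_conjl u_unit zq_mul1. Qed.

Variable a : int * int.

Definition zq_orbit (v : int * int) : Prop :=
  exists m, let w := zq_mul (zq_expz u m) a in w = v \/ w = zq_conj v.

Lemma zq_orbit_base : zq_orbit a.
Proof. by exists 0; left; rewrite zq_mul1. Qed.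

Lemma zq_orbit_conj v : zq_orbit v -> zq_orbit (zq_conj v).
Proof. by case=> m /= [] E; exists m; [right|left]; rewrite ?zq_conjK. Qed.

Lemma zq_orbit_mul_conj v : zq_orbit (zq_mul (zq_conj u) v) -> zq_orbit v.
Proof.
case=> m /= [] E.
  exists (m + 1); left.
  by rewrite zq_expzS -zq_mulA E zq_mulA zq_mul_conj u_unit zq_mul1.
exists (m - 1); right.
rewrite zq_expzB1 -zq_mulA E zq_conjM zq_conjK.
by rewrite zq_mulA zq_mul_conjl u_unit zq_mul1.
Qed.

End Unit.

End QuadraticIntegers.

Definition qs17_of_int (u : int * int) : qs17 := QS u.1%:~R u.2%:~R.

Lemma qs17_of_int_mul u v :
  qs17_mul (qs17_of_int u) (qs17_of_int v) = qs17_of_int (zq_mul 17 u v).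
Proof.
by rewrite /qs17_mul /qs17_of_int /=; congr QS; rewrite ?intrD ?intrM.
Qed.

Lemma qs17_of_int_expz u m : zq_norm 17 u = 1 ->
  qs17_expz (qs17_of_int u) m = qs17_of_int (zq_expz 17 u m).
Proof.
move=> u1; have expnE v n : qs17_expn (qs17_of_int v) n = qs17_of_int (zq_expn 17 v n).
  by elim: n => [|n /= ->]; rewrite ?qs17_of_int_mul.
case: m => n; rewrite /= ?expnE //.
suff -> : qs17_inv (qs17_of_int u) = qs17_of_int (zq_conj u).
  by rewrite expnE qs17_of_int_mul.
have N1 : qs17_norm (qs17_of_int u) = 1.
  by rewrite /qs17_norm /= -[17%:R]/((17 : int)%:~R) -!rmorphXn -rmorphM -rmorphB -/(zq_norm 17 u) u1.
by rewrite /qs17_inv N1 !divr1 /qs17_of_int /= rmorphN.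
Qed.

Definition eps : int * int := (2177, 528).
Definition alpha : int * int := (433, 105).

Lemma zq_norm_eps : zq_norm 17 eps = 1. Proof. by rewrite /zq_norm /=; ring. Qed.

Lemma zq_norm_alpha : zq_norm 17 alpha = 64. Proof. by rewrite /zq_norm /=; ring. Qed.

Notation alpha_orbit := (zq_orbit 17 eps alpha).

Lemma pell64_small_check : all (fun t => all (fun y =>
    ((25 + 34 * t) ^ 2 == 64 + 17 * y ^ 2)%N ==> (t == 4)%N && (y == 39)%N)
  (iota 0 65)) (iota 0 8).
Proof. by vm_compute. Qed.

Lemma pell64_small x y : 0 <= y <= 64 -> 0 < x -> zq_norm 17 (x, y) = 64 ->
  (34 %| x - 25)%Z -> (x, y) = (161, 39).
Proof.
rewrite /zq_norm /= !expr2 => /andP[y0 y64] x0 N /dvdzP[t Et].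
have x264 : x <= 264 by nia.
case: t Et => [t|t] Et; last by lia.
case: y y0 y64 N => [y|//] _ y64 N.
have t_in : t \in iota 0 8 by rewrite mem_iota; lia.
have y_in : y \in iota 0 65 by rewrite mem_iota; lia.
have sol : ((25 + 34 * t) ^ 2 == 64 + 17 * y ^ 2)%N by apply/eqP; nia.
move/allP: pell64_small_check => /(_ _ t_in) /allP /(_ _ y_in) /implyP /(_ sol).
by case/andP => /eqP t4 /eqP y39; apply: (f_equal2 pair); lia.
Qed.

Lemma alpha_orbit_161_39 : alpha_orbit (161, 39).
Proof.
apply: (zq_orbit_mul_conj _ _ zq_norm_eps).
have -> : zq_mul 17 (zq_conj eps) (161, 39) = zq_conj alpha.
  by rewrite /zq_mul /zq_conj /eps /alpha; cbn [fst snd]; apply: (f_equal2 pair); lia.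
exact/zq_orbit_conj/zq_orbit_base.
Qed.

Lemma pell64_orbit x y : 0 < x -> zq_norm 17 (x, y) = 64 -> (34 %| x - 25)%Z ->
  alpha_orbit (x, y).
Proof.
have [n lt_yn] := ubnP (absz y); elim: n x y lt_yn => // n IH x y /ltnSE le_yn x0 N x34.
wlog y0 : y le_yn N / 0 <= y.
  move=> wlog_y; have [/wlog_y|y_neg] := lerP 0 y; first exact.
  rewrite -[y]opprK; apply: (@zq_orbit_conj _ _ _ (x, - y)); apply: wlog_y; last by lia.
    by rewrite abszN.
  by rewrite -zq_norm_conj /zq_conj /= opprK.
have [y64|y64] := lerP y 64.
  by rewrite (pell64_small _ _ _ x0 N x34) ?y0 //; apply: alpha_orbit_161_39.
apply: (zq_orbit_mul_conj _ _ zq_norm_eps).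
set v := zq_mul 17 (zq_conj eps) (x, y).
have Nv : zq_norm 17 v = 64 by rewrite zq_normM zq_norm_conj zq_norm_eps N mul1r.
have vE : v = (2177 * x - 8976 * y, 2177 * y - 528 * x).
  by rewrite /v /zq_mul /zq_conj /eps; cbn [fst snd]; apply: (f_equal2 pair); lia.
rewrite vE in Nv *; move: N; rewrite /zq_norm /= !expr2 => N.
apply: (IH _ _ _ _ Nv); clear Nv; [nia | nia | lia].
Qed.

Lemma intr_eq_div (R : numFieldType) (q a c : int) : c != 0 ->
  (q%:~R = a%:~R / c%:~R :> R) <-> q * c = a.
Proof.
move=> c0; have c0' : (c%:~R : R) != 0 by rewrite intr_eq0.
split=> [qE|<-]; last by rewrite intrM mulfK.
by apply: (@intr_inj R); rewrite intrM qE divfK.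
Qed.

Lemma qs17_tr_eps_alpha m :
  qs17_tr (qs17_mul (qs17_expz (QS 2177%:R 528%:R) m) (QS 433%:R 105%:R)) + 18%:R =
  (2 * (zq_mul 17 (zq_expz 17 eps m) alpha).1 + 18)%:~R.
Proof.
have epsE : QS 2177%:R 528%:R = qs17_of_int eps.
  by rewrite /qs17_of_int /eps [RHS]/= !rmorph_nat.
have alphaE : QS 433%:R 105%:R = qs17_of_int alpha.
  by rewrite /qs17_of_int /alpha [RHS]/= !rmorph_nat.
rewrite [X in qs17_expz X]epsE [X in qs17_mul _ X]alphaE.
by rewrite (qs17_of_int_expz _ _ zq_norm_eps) qs17_of_int_mul /qs17_tr intrD intrM.
Qed.

Theorem lemmaA3 (q : int) (hq_even : (2 %| q)%Z) (hq4 : 4 <= q) :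
  (exists k : int, 0 <= k /\ k ^+ 2 = (q - 1) * (17 * q - 1))
  <->
  (exists m : int,
     (q%:~R : rat) =
       (qs17_tr (qs17_mul (qs17_expz (QS 2177%:R 528%:R) m) (QS 433%:R 105%:R))
        + 18%:R) / 34%:R).
Proof.
split=> [[k [k0 Hk]] | [m]].
  have [m /= orbit_m] : alpha_orbit (17 * q - 9, k).
    apply: pell64_orbit; [lia | | lia].
    by rewrite /zq_norm /= Hk; ring.
  exists m; rewrite qs17_tr_eps_alpha -[34%:R]/((34 : int)%:~R) intr_eq_div //.
  by case: orbit_m => ->; rewrite /=; lia.
rewrite qs17_tr_eps_alpha -[34%:R]/((34 : int)%:~R) intr_eq_div //.
case E : (zq_mul 17 (zq_expz 17 eps m) alpha) => [a b] /= qE.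
have : zq_norm 17 (a, b) = 64.
  by rewrite -E zq_normM (zq_norm_expz _ _ zq_norm_eps) zq_norm_alpha mul1r.
rewrite /zq_norm /= => N.
exists `|b|; split; first exact: normr_ge0.
rewrite real_normK ?num_real //; nia.
Qed.
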